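(* Let $\Delta$ be a $2$-connected simplicial graph of genus $g\ge 4$ in which every vertex has valency at least $3$. Then the girth of $\Delta$ is at most $\left\lfloor\frac{g+3}{2}\right\rfloor$, except for at most three graphs (up to isomorphism).
   Context: A simplicial graph is a finite $1$-dimensional simplicial complex (a finite simple graph); it is $2$-connected if it is connected, has at least $3$ vertices, and remains connected after deleting any vertex. The genus is $g=1-v+e$ where $v$, $e$ are the numbers of vertices and edges. The girth is the length of a shortest cycle. *)

From mathcomp Require Import all_boot all_order all_algebra.
Set Implicit Arguments. Unset Strict Implicit. Unset Printing Implicit Defensive.

Definition simple_graph (T : finType) (e : rel T) : Prop :=
  symmetric e /\ irreflexive e.

Definition edges (T : finType) (e : rel T) : {set {set T}} :=
  [set [set x; y] | x in T, y in T & e x y].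

Definition genus (T : finType) (e : rel T) : int :=
  (1%:Z - (#|T|)%:Z + (#|edges e|)%:Z)%R.

Definition connected_graph (T : finType) (e : rel T) : Prop :=
  forall x y : T, connect e x y.

Definition del_vertex (T : finType) (e : rel T) (v : T) : rel T :=
  fun a b => [&& e a b, a != v & b != v].

Definition two_connected (T : finType) (e : rel T) : Prop :=
  [/\ connected_graph e, 3 <= #|T| &
      forall v x y : T, x != v -> y != v -> connect (del_vertex e v) x y].

Definition valency (T : finType) (e : rel T) (x : T) : nat := #|[pred y | e x y]|.

Definition has_cycle_of_length (T : finType) (e : rel T) (k : nat) : bool :=
  (2 < k) && [exists t : k.-tuple T, uniq t && cycle e t].

(* girth = length of a shortest cycle; for an acyclic graph we use the
   convention #|T|.+1 (any cycle has length <= #|T|). *)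
Definition girth (T : finType) (e : rel T) : nat :=
  \big[minn/#|T|.+1]_(0 <= k < #|T|.+1 | has_cycle_of_length e k) k.

Definition graph_iso (T T' : finType) (e : rel T) (e' : rel T') : Prop :=
  exists f : T -> T', bijective f /\ forall x y, e x y = e' (f x) (f y).

(* A graph of genus g with minimum valency 3 has 2e >= 3v, so girth > (g + 3)/2 forces
   v <= 4 girth - 10.  Non-backtracking walks shorter than the girth are determined by their
   endpoints, so those of length at most d from a vertex (girth 2d + 1), resp. from an edge
   (girth 2d + 2), end at distinct vertices; this Moore bound v >= 3 2^d - 2, resp.
   v >= 2^(d+2) - 2, leaves only cubic graphs with (v, girth) = (6, 4), (10, 5), (14, 6).
   Each is identified by computation: label a breadth-first tree from a vertex, certify by
   short non-backtracking walks that the labels are distinct vertices and that most non-tree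
   pairs are non-adjacent, then check every cubic completion of the remaining pairs of
   sufficient girth against K_{3,3}, the Petersen graph and the Heawood graph. *)

From mathcomp Require Import all_boot all_order all_algebra.
From mathcomp Require Import zify.
Set Implicit Arguments. Unset Strict Implicit. Unset Printing Implicit Defensive.

(** * Non-backtracking walks *)

Section NonBacktrackingWalk.
Variables (A : eqType) (r d : rel A).

(* With d := (!=) these are the non-backtracking walks of the graph r. *)
Fixpoint nb_walk (w : seq A) : bool :=
  if w is a :: ((b :: w2) as w1) then
    [&& r a b, (if w2 is c :: _ then d a c else true) & nb_walk w1]
  else true.

Lemma nb_walk_cons2 a b w : nb_walk (a :: b :: w) =
  [&& r a b, (if w is c :: _ then d a c else true) & nb_walk (b :: w)].
Proof. by []. Qed.

Lemma nb_walk_behead a w : nb_walk (a :: w) -> nb_walk w.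
Proof. by case: w => [|b [|c w]] //= /and3P[]. Qed.

Lemma nb_walk_path a w : nb_walk (a :: w) -> path r a w.
Proof.
elim: w a => [|b w IHw] a //= /and3P[rab _ walk_bw].
by rewrite rab IHw.
Qed.

Lemma nb_walk_catl s t : nb_walk (s ++ t) -> nb_walk s.
Proof.
elim: s => [|a [|b s] IHs] // walk_st.
have walk_s := IHs (nb_walk_behead walk_st).
move: walk_st; rewrite !cat_cons nb_walk_cons2 => /and3P[rab dac _].
by rewrite nb_walk_cons2 rab walk_s andbT; case: s dac {IHs walk_s}.
Qed.

Lemma nb_walk_rcons2 x w y z : nb_walk (x :: rcons (rcons w y) z) =
  [&& nb_walk (x :: rcons w y), r y z & d (last x w) z].
Proof.
elim: w x => [|c w IHw] x.
  by rewrite /= !andbT; case: (r x y); case: (d x z); case: (r y z).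
rewrite !rcons_cons !nb_walk_cons2 IHw /=.
case: w {IHw} => [|c' w] /=.
  by case: (r x c); case: (d x y); case: (r c y); case: (r y z); case: (d c z).
by case: (r x c); case: (d x c'); case: (r y z); case: (d _ z); case: (nb_walk _).
Qed.

Lemma nb_walk_rcons a b t z : nb_walk (a :: b :: t) ->
  r (last b t) z -> d (last a (belast b t)) z -> nb_walk (a :: b :: rcons t z).
Proof.
case/lastP: t => [|t y]; first by rewrite /= => /andP[-> _] -> ->.
rewrite last_rcons belast_rcons => walk_t ryz dz.
by rewrite -rcons_cons -[b :: _]rcons_cons nb_walk_rcons2 walk_t ryz.
Qed.

Hypotheses (r_sym : symmetric r) (d_sym : symmetric d).

Lemma nb_walk_cat_rev x u z v : v != [::] ->
  nb_walk (x :: rcons u z) -> nb_walk (rcons v z) -> d (last x u) (last z v) ->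
  nb_walk (x :: rcons u z ++ rev v).
Proof.
elim/last_ind: v x u z => [|v y IHv] x u z // _ walk_u walk_v d_ends.
rewrite rev_rcons -cat_rcons last_rcons in d_ends *.
have walk_uy : nb_walk (x :: rcons (rcons u z) y).
  rewrite nb_walk_rcons2 walk_u d_ends andbT r_sym.
  case: v walk_v {IHv} => [|a v]; first by rewrite /= andbT.
  by rewrite !rcons_cons nb_walk_rcons2 => /and3P[].
case: v walk_v IHv => [|a v] walk_v IHv; first by rewrite cats0.
move: walk_v; rewrite !rcons_cons nb_walk_rcons2 => /and3P[walk_v _ d_v].
by apply: IHv; rewrite ?last_rcons // d_sym.
Qed.

End NonBacktrackingWalk.

Lemma nb_walk_map (A B : eqType) (r d : rel A) (r' d' : rel B) (f : A -> B) :
  {homo f : a b / r a b >-> r' a b} -> {homo f : a b / d a b >-> d' a b} ->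
  forall w, nb_walk r d w -> nb_walk r' d' (map f w).
Proof.
move=> f_r f_d; elim=> [|a [|b w] IHw] // walk_w.
rewrite [map _ _]/= nb_walk_cons2 -map_cons IHw ?(nb_walk_behead walk_w) // andbT.
case/and3P: walk_w => rab dac _; rewrite f_r //.
by case: w dac {IHw} => //= c w; apply: f_d.
Qed.

Lemma bigmin_le (r : seq nat) (P : pred nat) (F : nat -> nat) x0 j :
  j \in r -> P j -> \big[minn/x0]_(i <- r | P i) F i <= F j.
Proof.
elim: r => [|a r IHr] //; rewrite inE big_cons => /orP[/eqP<-|jr] Pj.
  by rewrite Pj geq_minl.
case: (P a); last exact: IHr.
exact: leq_trans (geq_minr _ _) (IHr jr Pj).
Qed.

Notation nb_graph_walk e := (nb_walk e (fun a b => a != b)).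

Section Girth.
Variables (T : finType) (e : rel T).
Hypotheses (e_sym : symmetric e) (e_irr : irreflexive e).

Lemma girth_le k : has_cycle_of_length e k -> girth e <= k.
Proof.
move=> cyc_k; have /andP[_ /existsP[t /andP[uniq_t _]]] := cyc_k.
apply: bigmin_le => //; rewrite mem_index_iota ltnS.
by rewrite -(size_tuple t) -(card_uniqP uniq_t) max_card.
Qed.

Lemma nb_walk_has_cycle w : nb_graph_walk e w -> ~~ uniq w ->
  exists2 k, k < size w & has_cycle_of_length e k.
Proof.
elim: w => [|a w IHw] // walk_w.
have [uniq_w|not_uniq_w] := boolP (uniq w); last first.
  by case: (IHw (nb_walk_behead walk_w) not_uniq_w) => k ? ?; exists k => //; apply: ltnW.
rewrite cons_uniq uniq_w andbT negbK => a_w.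
case/splitPr: a_w walk_w uniq_w => s1 s2 walk_w uniq_w.
move: uniq_w; rewrite cat_uniq => /and3P[uniq_s1 /hasPn/(_ a (mem_head _ _)) a_s1 _].
move: (nb_walk_path walk_w); rewrite cat_path => /andP[path_s1 /andP[e_last _]].
exists (size (a :: s1)); first by rewrite /= size_cat /= ltnS -addSnnS leq_addr.
apply/andP; split.
  by case: s1 {a_s1 uniq_s1 path_s1 e_last} walk_w => [|b [|c s1]] //=;
    rewrite ?e_irr // eqxx andbF.
apply/existsP; exists (in_tuple (a :: s1)).
by rewrite /= a_s1 uniq_s1 -cats1 cat_path path_s1 /= e_last.
Qed.

Lemma nb_walk_uniq w : nb_graph_walk e w -> size w <= girth e -> uniq w.
Proof.
move=> walk_w size_w; apply/negPn/negP => /(nb_walk_has_cycle walk_w)[k ltk cyc_k].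
by have := leq_trans size_w (girth_le cyc_k); rewrite leqNgt ltk.
Qed.

Lemma closed_not_uniq (a : T) s : s != [::] -> last a s = a -> ~~ uniq (a :: s).
Proof.
by case/lastP: s => [|s z] // _; rewrite last_rcons => ->; rewrite /= mem_rcons mem_head.
Qed.

Lemma nb_walk_unique a s1 s2 : size s1 + size s2 < girth e ->
  nb_graph_walk e (a :: s1) -> nb_graph_walk e (a :: s2) ->
  last a s1 = last a s2 -> s1 = s2.
Proof.
move: {2}(size s1 + size s2) (leqnn (size s1 + size s2)) => N.
elim: N a s1 s2 => [|N IHN] a s1 s2 sizeN lt_girth walk1 walk2 last12.
  by move: sizeN; rewrite leqn0 addn_eq0 !size_eq0 => /andP[/eqP-> /eqP->].
have closed_short s : s != [::] -> last a s = a -> size s < girth e ->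
    ~~ nb_graph_walk e (a :: s).
  move=> s0 last_s lt_s; apply/negP => walk_s.
  by move/negP: (closed_not_uniq s0 last_s); apply; apply: nb_walk_uniq.
have [s1E | s1_nil] := eqVneq s1 [::].
  rewrite s1E in last12 lt_girth *.
  have [-> // | s2_nil] := eqVneq s2 [::].
  by case/negP: (closed_short s2 s2_nil (esym last12) lt_girth).
have [s2E | s2_nil] := eqVneq s2 [::].
  rewrite s2E addn0 in last12 lt_girth.
  by case/negP: (closed_short s1 s1_nil last12 lt_girth).
move: s1_nil s2_nil walk1 walk2 last12 sizeN lt_girth.
case/lastP: s1 => [|s1 z1] //; case/lastP: s2 => [|s2 z2] // _ _ walk1 walk2.
rewrite !last_rcons => z21; subst z2; rewrite !size_rcons addSn addnS !ltnS => sizeN lt_girth.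
have [last12 | last12] := eqVneq (last a s1) (last a s2).
  congr rcons; apply: (IHN a) => //; first exact: ltnW.
  - lia.
  - by move: walk1; rewrite -rcons_cons -cats1 => /nb_walk_catl.
  - by move: walk2; rewrite -rcons_cons -cats1 => /nb_walk_catl.
have walk_cycle : nb_graph_walk e (a :: rcons s1 z1 ++ rev (a :: s2)).
  by apply: nb_walk_cat_rev => // x y; rewrite eq_sym.
have := nb_walk_uniq walk_cycle.
rewrite /= size_cat size_rcons size_rev /= addSn addnS => /(_ lt_girth).
by rewrite mem_cat mem_rev mem_head orbT.
Qed.

End Girth.

(** * The Moore bound *)

Section NonBacktrackingLayers.
Variables (T : finType) (e : rel T).
Hypothesis valency_ge3 : forall x, 3 <= valency e x.

Lemma card_neighbours_but v u : 2 <= #|[pred w | e v w && (w != u)]|.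
Proof.
have := valency_ge3 v; rewrite /valency (cardD1 u) inE.
have -> : #|[predD1 [pred y | e v y] & u]| = #|[pred w | e v w && (w != u)]|.
  by apply: eq_card => w; rewrite !inE andbC.
by case: (e v u); lia.
Qed.

(* An arc is a pair (tail, head). *)
Definition nb_step (S : {set T * T}) : {set T * T} :=
  [set p | [exists u, [&& (u, p.1) \in S, e p.1 p.2 & p.2 != u]]].

Lemma card_nb_step (S : {set T * T}) : {in S &, injective snd} -> 2 * #|S| <= #|nb_step S|.
Proof.
move=> head_inj.
pose next (p : T * T) := enum [pred w | e p.2 w && (w != p.1)].
have size_next p (b : bool) : b < size (next p).
  by rewrite -cardE; apply: leq_trans (card_neighbours_but _ _); case: b.
pose extend (pb : (T * T) * bool) := (pb.1.2, nth pb.1.2 (next pb.1) pb.2).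
have -> : 2 * #|S| = #|setX S [set: bool]| by rewrite cardsX cardsT card_bool mulnC.
rewrite -(@card_in_imset _ _ extend); last first.
  move=> [p b] [q c]; rewrite !inE /= => /andP[pS _] /andP[qS _] [pq_head next_bc].
  have pq := head_inj _ _ pS qS pq_head; subst q.
  move/eqP: next_bc; rewrite nth_uniq ?enum_uniq ?size_next // => /eqP.
  by case: b; case: c.
apply: subset_leq_card; apply/subsetP => w /imsetP[[p b]].
rewrite !inE /= => /andP[pS _] ->; apply/existsP; exists p.1 => /=.
have := mem_nth p.2 (size_next p b); rewrite mem_enum inE => /andP[-> ->].
by rewrite -surjective_pairing pS.
Qed.

Variable S1 : {set T * T}.
Hypothesis S1_arcs : forall p, p \in S1 -> e p.1 p.2.

Notation layer k := (iter k nb_step S1).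

Lemma nb_layer_walk k p : p \in layer k -> exists a b t,
  [/\ (a, b) \in S1, nb_graph_walk e (a :: b :: t), size t = k, last b t = p.2 &
      last a (belast b t) = p.1].
Proof.
elim: k p => [|k IHk] [p1 p2] /=.
  by move=> p_S1; exists p1, p2, [::]; rewrite /= andbT (S1_arcs p_S1).
rewrite inE => /existsP[u /and3P[/IHk[a [b [t [S1ab walk_t size_t last_t belast_t]]]] e12 p2u]].
rewrite /= in last_t belast_t.
exists a, b, (rcons t p2); rewrite size_rcons size_t last_rcons belast_rcons.
split=> //; apply: nb_walk_rcons => //; first by rewrite last_t.
by rewrite belast_t eq_sym.
Qed.

Lemma card_nb_layer_ge K c : c <= #|S1| ->
  (forall j, j < K -> {in layer j &, injective snd}) ->
  forall k, k < K -> c * 2 ^ k <= #|layer k|.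
Proof.
move=> c_S1 layer_inj; elim=> [|k IHk] ltkK; first by rewrite muln1.
apply: leq_trans (card_nb_step (layer_inj k (ltnW ltkK))).
by rewrite expnS mulnCA leq_mul2l IHk // ltnW.
Qed.

Lemma nb_layers_count K c (X : {set T}) : c <= #|S1| ->
  (forall j k p q, j < K -> k < K -> p \in layer j -> q \in layer k ->
     p.2 = q.2 -> j = k /\ p = q) ->
  (forall k p, k < K -> p \in layer k -> p.2 \notin X) ->
  c * 2 ^ K + #|X| <= #|T| + c.
Proof.
move=> c_S1 heads_inj heads_X.
pose heads := [set kp.2.2 | kp in [set kp : 'I_K * (T * T) | kp.2 \in layer kp.1]].
have card_heads : \sum_(k < K) #|layer k| = #|heads|.
  rewrite card_in_imset; last first.
    move=> [j p] [k q]; rewrite !inE /= => p_j q_k.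
    move/(heads_inj _ _ _ _ (ltn_ord j) (ltn_ord k) p_j q_k).
    by case=> /val_inj-> ->.
  rewrite -sum1_card (eq_bigl (fun kp : 'I_K * (T * T) => kp.2 \in layer kp.1)); last first.
    by move=> kp; rewrite inE.
  rewrite -(pair_big_dep xpredT (fun (k : 'I_K) p => p \in layer k) (fun _ _ => 1)) /=.
  by apply: eq_bigr => k _; rewrite sum1_card.
have sum_layers : \sum_(k < K) c * 2 ^ k <= \sum_(k < K) #|layer k|.
  apply: leq_sum => k _; apply: card_nb_layer_ge (ltn_ord k) => // j ltjK p q p_j q_j.
  by move=> /(heads_inj _ _ _ _ ltjK ltjK p_j q_j)[].
have geom : \sum_(k < K) c * 2 ^ k + c = c * 2 ^ K.
  elim: K {heads_inj heads_X heads card_heads sum_layers} => [|K IHK].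
    by rewrite big_ord0 muln1.
  by rewrite big_ord_recr /= addnAC IHK expnS mulnCA mul2n -addnn.
have disj : [disjoint heads & X].
  apply/pred0P => v /=; apply/negbTE; apply/andP => -[/imsetP[[k p]]].
  by rewrite inE /= => p_k ->; apply/negP; apply: heads_X p_k.
have := max_card (mem (heads :|: X)); rewrite cardsU (disjoint_setI0 disj) cards0 subn0.
by rewrite -geom -card_heads; lia.
Qed.

End NonBacktrackingLayers.

Section MooreBound.
Variables (T : finType) (e : rel T).
Hypotheses (e_sym : symmetric e) (e_irr : irreflexive e).
Hypothesis valency_ge3 : forall x, 3 <= valency e x.

Notation layer S1 k := (iter k (nb_step e) S1).

Lemma moore_bound_odd (x : T) d : d.*2 < girth e -> 3 * 2 ^ d <= #|T| + 2.
Proof.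
move=> lt_girth.
pose S1 := [set p : T * T | (p.1 == x) && e x p.2].
have S1_arcs p : p \in S1 -> e p.1 p.2 by case: p => p1 p2; rewrite inE /= => /andP[/eqP-> ->].
have card_S1 : 3 <= #|S1|.
  have pair_inj : injective (@pair T T x) by move=> y z [].
  apply: leq_trans (valency_ge3 x) _; rewrite /valency -(card_imset _ pair_inj).
  apply: subset_leq_card; apply/subsetP => _ /imsetP[y y_nb ->].
  by rewrite inE /= eqxx; rewrite inE in y_nb.
have walk_from_x k p : p \in layer S1 k -> exists b t,
    [/\ nb_graph_walk e (x :: b :: t), size t = k, last b t = p.2 & last x (belast b t) = p.1].
  case/(nb_layer_walk S1_arcs) => a [b [t [S1ab walk_t size_t last_t belast_t]]].
  by move: S1ab walk_t belast_t; rewrite inE /= => /andP[/eqP-> _]; exists b, t.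
have short j k : j < d -> k < d -> j.+1 + k.+1 < girth e.
  by move=> ltj ltk; move: lt_girth; rewrite -addnn; lia.
have heads_inj j k p q : j < d -> k < d -> p \in layer S1 j -> q \in layer S1 k ->
    p.2 = q.2 -> j = k /\ p = q.
  move=> ltj ltk /walk_from_x[b1 [t1 [walk1 size1 last1 belast1]]].
  move=> /walk_from_x[b2 [t2 [walk2 size2 last2 belast2]]] pq.
  have [b12 t12] : b1 :: t1 = b2 :: t2.
    apply: (nb_walk_unique e_sym e_irr (a := x)) => //=; last by rewrite last1 last2.
    by rewrite size1 size2; apply: short.
  subst b2 t2; split; first by rewrite -size1 -size2.
  by rewrite [p]surjective_pairing [q]surjective_pairing -belast1 -belast2 -pq.
have heads_not_x k p : k < d -> p \in layer S1 k -> p.2 \notin [set x].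
  move=> ltk /walk_from_x[b [t [walk size_t last_t _]]]; rewrite inE.
  apply/eqP => last_x; suff : [::] = b :: t by [].
  apply: (nb_walk_unique e_sym e_irr (a := x)) => //=; last by rewrite last_t last_x.
  by rewrite size_t; move: lt_girth; rewrite -addnn; lia.
have := nb_layers_count valency_ge3 card_S1 heads_inj heads_not_x.
by rewrite cards1; lia.
Qed.

Lemma moore_bound_even (x y : T) : e x y -> forall d, d.*2.+1 < girth e -> 2 ^ d.+2 <= #|T| + 2.
Proof.
move=> exy d lt_girth.
pose S1 := [set (x, y); (y, x)].
have S1_arcs p : p \in S1 -> e p.1 p.2.
  by case/set2P=> ->; rewrite //= e_sym.
have card_S1 : 2 <= #|S1|.
  have x_neq_y : x != y by apply: contraTneq exy => ->; rewrite e_irr.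
  by rewrite cards2 xpair_eqE (negbTE x_neq_y).
have short j k : j < d.+1 -> k < d.+1 -> j + k < girth e.
  by move=> ltj ltk; move: lt_girth; rewrite -addnn; lia.
have crossing u v t1 t2 : nb_graph_walk e (u :: v :: t1) -> nb_graph_walk e (v :: u :: t2) ->
    last v t1 = last u t2 -> size t1 + (size t2).+1 < girth e -> False.
  move=> walk1 walk2 last12 lt12.
  have t1E : t1 = u :: t2 by apply: (nb_walk_unique e_sym e_irr) (nb_walk_behead walk1) _ _.
  by move: walk1; rewrite t1E /= eqxx andbF.
have heads_inj j k p q : j < d.+1 -> k < d.+1 -> p \in layer S1 j -> q \in layer S1 k ->
    p.2 = q.2 -> j = k /\ p = q.
  move=> ltj ltk /(nb_layer_walk S1_arcs)[a1 [b1 [t1 [S1ab1 walk1 size1 last1 belast1]]]].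
  move=> /(nb_layer_walk S1_arcs)[a2 [b2 [t2 [S1ab2 walk2 size2 last2 belast2]]]] pq.
  have same_start : a1 = a2 -> b1 = b2 -> j = k /\ p = q.
    move=> a12 b12; subst a2 b2.
    have t12 : t1 = t2.
      apply: (nb_walk_unique e_sym e_irr) (nb_walk_behead walk1) (nb_walk_behead walk2) _.
        by rewrite size1 size2 short.
      by rewrite last1 last2.
    subst t2; split; first by rewrite -size1 -size2.
    by rewrite [p]surjective_pairing [q]surjective_pairing -belast1 -belast2 -pq.
  have lt_jk : j + k.+1 < girth e by move: lt_girth; rewrite -addnn; lia.
  move: S1ab1 S1ab2 walk1 walk2 last1 last2 same_start.
  case/set2P=> -[-> ->]; case/set2P=> -[-> ->] walk1 walk2 last1 last2 same_start;
    try exact: same_start.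
    by case: (crossing x y t1 t2); rewrite ?last1 ?last2 ?size1 ?size2.
  by case: (crossing x y t2 t1); rewrite ?last1 ?last2 ?size1 ?size2 // addnS -addSn addnC.
have no_excluded k p : k < d.+1 -> p \in layer S1 k -> p.2 \notin set0 by rewrite in_set0.
have := nb_layers_count valency_ge3 card_S1 heads_inj no_excluded.
by rewrite cards0 addn0 -expnS.
Qed.

End MooreBound.

Section Handshake.
Variables (T : finType) (e : rel T).
Hypotheses (e_sym : symmetric e) (e_irr : irreflexive e).

Lemma set2_eqE (u v a b : T) : u != v ->
  ([set u; v] == [set a; b]) = ((u, v) == (a, b)) || ((u, v) == (b, a)).
Proof.
move=> u_neq_v; apply/eqP/orP => [uv_ab|[] /eqP[-> ->]]; last 2 first.
- by [].
- by rewrite setUC.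
have u_ab : u \in [set a; b] by rewrite -uv_ab set21.
have v_ab : v \in [set a; b] by rewrite -uv_ab set22.
case/set2P: u_ab => ?; case/set2P: v_ab => ?; subst u v;
  first [by left | by right | by rewrite eqxx in u_neq_v].
Qed.

Lemma handshake : \sum_(x : T) valency e x = 2 * #|edges e|.
Proof.
pose arcs := [set p : T * T | e p.1 p.2].
have -> : \sum_(x : T) valency e x = #|arcs|.
  rewrite -sum1_card (eq_bigl (fun p : T * T => true && e p.1 p.2)); last by move=> p; rewrite inE.
  rewrite -(pair_big_dep xpredT (fun x y => e x y) (fun _ _ => 1)).
  by apply: eq_bigr => x _; rewrite sum1_card.
rewrite -sum1_card (partition_big (fun p : T * T => [set p.1; p.2]) (mem (edges e))); last first.
  by move=> [u v]; rewrite inE /= => euv; apply/imset2P; exists u v; rewrite ?inE.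
rewrite mulnC -sum_nat_const; apply: eq_bigr => ab /imset2P[a b _]; rewrite inE => eab ->.
have a_neq_b : a != b by apply: contraTneq eab => ->; rewrite e_irr.
have -> : \sum_(p in arcs | [set p.1; p.2] == [set a; b]) 1 = #|[set (a, b); (b, a)]|.
  rewrite -sum1_card; apply: eq_bigl => [[u v]]; rewrite !inE /=.
  have [euv|neuv] /= := boolP (e u v).
    by rewrite set2_eqE //; apply: contraTneq euv => ->; rewrite e_irr.
  by apply/esym/negbTE; rewrite negb_or; apply/andP; split; apply: contraNN neuv => /eqP[-> ->];
    rewrite // e_sym.
by rewrite cards2 xpair_eqE negb_and a_neq_b.
Qed.

Lemma card_edges_ge k : (forall x, k <= valency e x) -> k * #|T| <= 2 * #|edges e|.
Proof.
move=> valency_ge; rewrite -handshake mulnC -sum_nat_const.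
by apply: leq_sum => x _; apply: valency_ge.
Qed.

Lemma valency_eq3 : (forall x, 3 <= valency e x) -> 2 * #|edges e| = 3 * #|T| ->
  forall x, valency e x = 3.
Proof.
move=> valency_ge3; rewrite -handshake => sum_valency x.
apply/eqP; rewrite eqn_leq valency_ge3 andbT.
have : \sum_(y : T) (valency e y - 3) == 0.
  rewrite sumnB; last by move=> y _; apply: valency_ge3.
  by rewrite sum_valency sum_nat_const cardE -cardE mulnC subnn.
by rewrite sum_nat_eq0 => /forallP /(_ x); rewrite subn_eq0.
Qed.

End Handshake.

Lemma expn2_ge_linear d : 4 * d <= 2 ^ d + 4.
Proof.
elim: d => [|d IHd] //; rewrite expnS.
case: d IHd => [|[|d]] // IHd.
have : 4 <= 2 ^ d.+2 by rewrite -[4]/(2 ^ 2) leq_exp2l.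
lia.
Qed.

Lemma small_girth_cases (v E g : nat) :
  3 * v <= 2 * E -> v + 3 <= E -> E + 5 <= g.*2 + v ->
  (forall d, d.*2 < g -> 3 * 2 ^ d <= v + 2) ->
  (forall d, d.*2.+1 < g -> 2 ^ d.+2 <= v + 2) ->
  [\/ [/\ v = 6, 2 * E = 3 * v & g = 4],
      [/\ v = 10, 2 * E = 3 * v & g = 5] |
      [/\ v = 14, 2 * E = 3 * v & g = 6]].
Proof.
move=> edges_ge genus_ge girth_gt moore_odd moore_even.
have := odd_double_half g; case: (odd g); move: g./2 => d gE.
- have := moore_odd d; have := expn2_ge_linear d; rewrite -gE ltnSn => pow_ge /(_ isT) moore.
  have d_le2 : d <= 2 by lia.
  by case: d d_le2 moore pow_ge gE => [|[|[|]]] //= _ moore _ gE;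
    first [exfalso; lia | apply: Or32; split; lia].
- case: d gE => [|d] gE; first by lia.
  have := moore_even d; have := expn2_ge_linear d; rewrite -gE doubleS ltnSn => pow_ge /(_ isT).
  rewrite !expnS => moore.
  have d_le2 : d <= 2 by lia.
  by case: d d_le2 moore pow_ge gE => [|[|[|]]] //= _ moore _ gE;
    first [exfalso; lia | apply: Or31; split; lia | apply: Or33; split; lia].
Qed.

(** * Identifying a cubic graph from a labelled breadth-first tree *)

(* The certificates below are evaluated by vm_compute, which evaluates both arguments of
   [&&]; the explicit conditionals keep the search lazy. *)
Fixpoint lazy_all (p : nat -> bool) (s : seq nat) : bool :=
  if s is a :: s' then (if p a then lazy_all p s' else false) else true.

Lemma lazy_allE p s : lazy_all p s = all p s.
Proof. by elim: s => //= a s ->; case: (p a). Qed.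

Fixpoint bitseqs (m : nat) : seq bitseq :=
  if m is m'.+1 then [seq b :: s | b <- [:: false; true], s <- bitseqs m'] else [:: [::]].

Lemma bitseqsP m s : size s = m -> s \in bitseqs m.
Proof.
elim: m s => [|m IHm] [|b s] //= [size_s]; rewrite cats0 mem_cat.
by case: b; apply/orP; [right|left]; rewrite mem_map ?IHm //; move=> ? ? [].
Qed.

Section TreeLabelling.
Variables (T : finType) (e : rel T).
Hypotheses (e_sym : symmetric e) (e_irr : irreflexive e).
Hypothesis cubic : forall x, valency e x = 3.
Variables (x0 : T) (n : nat) (parent child : nat -> nat).

Definition children (v u : T) : seq T := enum [pred w | e v w && (w != u)].

(* Label i > 0 names the (child i)-th neighbour of label (parent i) other than label
   (parent (parent i)); as parent 0 = 0, the root excludes only itself. *)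
Definition next_vertex (L : seq T) (i : nat) : T :=
  if i is 0 then x0 else
  nth x0 (children (nth x0 L (parent i)) (nth x0 L (parent (parent i)))) (child i).

Fixpoint tree_vertices (k : nat) : seq T :=
  if k is k'.+1 then rcons (tree_vertices k') (next_vertex (tree_vertices k') k') else [::].

Definition vertex (i : nat) : T := nth x0 (tree_vertices n) i.

Definition tree_shape : bool :=
  (parent 0 == 0) &&
  all (fun i => (parent i < i) && (child i < 2 + (parent i == 0))) (iota 1 n.-1).

Hypothesis shape : tree_shape.

Lemma tree_shapeP i : 0 < i < n -> parent i < i /\ child i < 2 + (parent i == 0).
Proof.
move: shape => /andP[_ /allP shape_all] /andP[i_gt0 i_lt_n].
apply/andP/shape_all; rewrite mem_iota i_gt0 /=.
by case: n i_lt_n => // n'; rewrite add1n.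
Qed.

Lemma grandparent_lt i : 0 < i < n -> parent (parent i) < i.
Proof.
move=> i_range; have [lt_pi _] := tree_shapeP i_range.
move: shape => /andP[/eqP parent0 _].
have [pi0|pi_gt0] := posnP (parent i); first by rewrite pi0 parent0; case/andP: i_range.
have pi_range : 0 < parent i < n by rewrite pi_gt0 (ltn_trans lt_pi) //; case/andP: i_range.
have [lt_ppi _] := tree_shapeP pi_range.
exact: ltn_trans lt_ppi lt_pi.
Qed.

Lemma size_tree_vertices k : size (tree_vertices k) = k.
Proof. by elim: k => //= k IHk; rewrite size_rcons IHk. Qed.

Lemma nth_tree_vertices k i : i < k -> nth x0 (tree_vertices k) i = next_vertex (tree_vertices i) i.
Proof.
elim: k => // k IHk; rewrite ltnS leq_eqVlt => /orP[/eqP->|lt_ik] /=.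
  by rewrite nth_rcons size_tree_vertices ltnn eqxx.
by rewrite nth_rcons size_tree_vertices lt_ik IHk.
Qed.

Lemma vertexE i : 0 < i < n ->
  vertex i = nth x0 (children (vertex (parent i)) (vertex (parent (parent i)))) (child i).
Proof.
move=> i_range; have [lt_pi _] := tree_shapeP i_range.
have lt_ppi := grandparent_lt i_range; case/andP: i_range => i_gt0 i_lt_n.
have prefix j : j < i -> nth x0 (tree_vertices i) j = vertex j.
  by move=> lt_ji; rewrite /vertex !nth_tree_vertices // (ltn_trans lt_ji).
rewrite {1}/vertex nth_tree_vertices //.
by case: i i_gt0 {i_lt_n} lt_pi lt_ppi prefix => //= i _ lt_pi lt_ppi prefix; rewrite !prefix.
Qed.

Lemma size_children v u : 2 + (u == v) <= size (children v u).
Proof.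
rewrite /children -cardE; have [->|u_neq_v] /= := eqVneq u v.
  rewrite addn1 -(cubic v) /valency; apply: eq_leq; apply: eq_card => w; rewrite !inE.
  by have [->|] := eqVneq w v; rewrite ?e_irr ?andbT.
by apply: card_neighbours_but => x; rewrite cubic.
Qed.

Let parent_vertex i := vertex (parent i).
Let grandparent_vertex i := vertex (parent (parent i)).

Lemma child_lt_size i : 0 < i < n ->
  child i < size (children (parent_vertex i) (grandparent_vertex i)).
Proof.
move=> i_range; have [_ child_lt] := tree_shapeP i_range.
apply: leq_trans child_lt _; apply: leq_trans (size_children _ _).
rewrite leq_add2l /parent_vertex /grandparent_vertex.
by case: posnP => [->|//]; move: shape => /andP[/eqP-> _]; rewrite eqxx.
Qed.

Lemma vertex_in_children i : 0 < i < n ->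
  vertex i \in children (parent_vertex i) (grandparent_vertex i).
Proof. by move=> i_range; rewrite vertexE //; apply: mem_nth; apply: child_lt_size. Qed.

Definition tree_edge (i j : nat) : bool :=
  ((0 < i < n) && (parent i == j)) || ((0 < j < n) && (parent j == i)).
Definition grandchild (i j : nat) : bool := [&& 0 < i < n, 0 < parent i & parent (parent i) == j].
Definition siblings (i j : nat) : bool :=
  [&& 0 < i < n, 0 < j < n, parent i == parent j & child i != child j].
Definition tree_apart (i j : nat) : bool := [|| siblings i j, grandchild i j | grandchild j i].

Lemma tree_edge_vertex i j : tree_edge i j -> e (vertex i) (vertex j).
Proof.
have edge_up k : 0 < k < n -> e (parent_vertex k) (vertex k).
  by move/vertex_in_children; rewrite mem_enum inE => /andP[].
by case/orP=> /andP[/edge_up + /eqP <-]; rewrite // e_sym.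
Qed.

Lemma tree_apart_vertex i j : tree_apart i j -> vertex i != vertex j.
Proof.
have not_grandparent k : 0 < k < n -> vertex k != grandparent_vertex k.
  by move/vertex_in_children; rewrite mem_enum inE => /andP[].
case/or3P=> [/and4P[i_range j_range /eqP pij cij]|/and3P[i_range _ /eqP <-]|
             /and3P[j_range _ /eqP <-]].
- rewrite (vertexE i_range) (vertexE j_range) pij nth_uniq ?enum_uniq //.
    by rewrite -pij; apply: child_lt_size.
  exact: child_lt_size.
- exact: not_grandparent.
- by rewrite eq_sym; apply: not_grandparent.
Qed.

Fixpoint ancestors (k i : nat) : seq nat :=
  if k is k'.+1 then i :: (if i is 0 then [::] else ancestors k' (parent i)) else [::].

Definition tree_path (i j : nat) : seq nat :=
  let ai := ancestors n.+1 i in let aj := ancestors n.+1 j in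
  let m := nth 0 ai (find (mem aj) ai) in
  take (index m ai).+1 ai ++ rev (take (index m aj) aj).

Variable g0 : nat.
Hypothesis g0_le_girth : g0 <= girth e.

(* The tree path from i to j is a non-backtracking walk shorter than the girth, so its
   ends are distinct vertices. *)
Definition distinct_cert (i j : nat) : bool :=
  if tree_path i j is a :: w then
    [&& a == i, last a w == j, nb_walk tree_edge tree_apart (a :: w) & size w < g0]
  else false.

Definition labels_distinct : bool :=
  all (fun i => all (fun j => (i == j) || distinct_cert i j) (iota 0 n)) (iota 0 n).

Hypothesis distinct : labels_distinct.

Lemma vertex_inj i j : i < n -> j < n -> vertex i = vertex j -> i = j.
Proof.
move=> i_lt j_lt vij; apply/eqP/negPn/negP => i_neq_j.
have /allP/(_ i) := distinct; rewrite mem_iota i_lt => /(_ isT) /allP /(_ j).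
rewrite mem_iota j_lt (negbTE i_neq_j) /distinct_cert => /(_ isT).
case: (tree_path i j) => // a w /and4P[/eqP ai /eqP last_w walk_w size_w]; subst a.
have walk_vw : nb_graph_walk e (map vertex (i :: w)).
  exact: nb_walk_map tree_edge_vertex tree_apart_vertex _ walk_w.
have := nb_walk_uniq e_irr walk_vw; rewrite size_map /= => /(_ (leq_trans size_w g0_le_girth)).
apply/negP; apply: closed_not_uniq.
  by case: w last_w {walk_w size_w walk_vw} => //= last_w; rewrite last_w eqxx in i_neq_j.
by rewrite last_map last_w vij.
Qed.

Definition label_neq (u v : nat) : bool := [&& u != v, u < n & v < n].
Definition tree_edge_plus (i j : nat) (u v : nat) : bool :=
  [|| tree_edge u v, (u == i) && (v == j) | (u == j) && (v == i)].

(* An edge ij would close the tree path from j to i into a non-backtracking walk shorter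
   than the girth. *)
Definition nonadj_cert (i j : nat) : bool :=
  if tree_path j i is a :: w then
    [&& a == j, last a w == i, nb_walk (tree_edge_plus i j) label_neq (rcons (a :: w) j) &
        size w + 2 <= g0]
  else false.

Lemma nonadj_certP i j : nonadj_cert i j -> ~~ e (vertex i) (vertex j).
Proof.
rewrite /nonadj_cert; case: (tree_path j i) => // a w /and4P[/eqP aj /eqP last_w walk_w size_w].
subst a; apply/negP => eij.
have walk_vw : nb_graph_walk e (map vertex (rcons (j :: w) j)).
  apply: nb_walk_map walk_w.
    move=> u v /or3P[/tree_edge_vertex //|/andP[/eqP-> /eqP->]//|/andP[/eqP-> /eqP->]].
    by rewrite e_sym.
  move=> u v /and3P[u_neq_v u_lt v_lt]; apply: contra u_neq_v => /eqP vuv.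
  by apply/eqP; apply: vertex_inj.
have size_vw : size (map vertex (rcons (j :: w) j)) <= girth e.
  by rewrite size_map size_rcons /= -addn2 (leq_trans size_w g0_le_girth).
have := nb_walk_uniq e_irr walk_vw size_vw; apply/negP.
rewrite rcons_cons map_cons; apply: closed_not_uniq.
  by rewrite map_rcons; case: (map vertex w).
by rewrite map_rcons last_rcons.
Qed.

(* The far pairs are those whose adjacency is left open; a completion assigns them bits. *)
Variable far : seq (nat * nat).

Fixpoint far_lookup (L : seq (nat * nat)) (f : bitseq) (i j : nat) : bool :=
  match L, f with
  | (a, b) :: L', c :: f' =>
      if (eqn a i && eqn b j) || (eqn a j && eqn b i) then c else far_lookup L' f' i j
  | _, _ => false
  end.

Definition is_far (i j : nat) : bool := ((i, j) \in far) || ((j, i) \in far).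
Definition completion_adj (f : bitseq) (i j : nat) : bool :=
  if tree_edge i j then true else far_lookup far f i j.

Definition label_adj (i j : nat) : bool := e (vertex i) (vertex j).
Definition true_bits : bitseq := map (fun p => label_adj p.1 p.2) far.

Lemma far_lookup_not_far f i j : ~~ is_far i j -> far_lookup far f i j = false.
Proof.
rewrite /is_far; elim: far f => [|[a b] L IHL] [|c f] //=.
rewrite !inE !negb_or => /andP[/andP[ij_ab ij_L] /andP[ji_ab ji_L]].
rewrite IHL; last by rewrite negb_or ij_L ji_L.
by rewrite !eqnE; case: ifP => // /orP[] /andP[/eqP ai /eqP bj]; subst a b;
  rewrite eqxx in ij_ab ji_ab.
Qed.

Lemma far_lookup_true_bits i j : is_far i j -> far_lookup far true_bits i j = label_adj i j.
Proof.
rewrite /true_bits /is_far; elim: far => [|[a b] L IHL] //= ij_far.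
rewrite !eqnE; case: ifP => [/orP[] /andP[/eqP-> /eqP->] //|not_ab].
  by rewrite /label_adj e_sym.
apply: IHL; move: ij_far not_ab; rewrite !inE.
by case/orP=> /orP[/eqP[-> ->]|->]; rewrite ?eqxx ?orbT.
Qed.

Definition adjacency_classified : bool :=
  all (fun i => all (fun j =>
    if i == j then ~~ tree_edge i i && ~~ is_far i i else
    [|| tree_edge i j && ~~ is_far i j, is_far i j && ~~ tree_edge i j |
        [&& ~~ tree_edge i j, ~~ is_far i j & nonadj_cert i j]]) (iota 0 n)) (iota 0 n).

Hypothesis classified : adjacency_classified.

Lemma label_adjE i j : i < n -> j < n -> label_adj i j = completion_adj true_bits i j.
Proof.
move=> i_lt j_lt; have /allP/(_ i) := classified; rewrite mem_iota i_lt => /(_ isT).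
move=> /allP/(_ j); rewrite mem_iota j_lt /completion_adj => /(_ isT).
case: eqP => [<- /andP[/negbTE-> not_far]|_].
  by rewrite far_lookup_not_far // /label_adj e_irr.
case/or3P=> [/andP[edge _]|/andP[far_ij /negbTE->]|/and3P[/negbTE-> not_far cert]].
- by rewrite edge /label_adj tree_edge_vertex.
- exact/esym/far_lookup_true_bits.
- by rewrite far_lookup_not_far //; apply/negbTE/nonadj_certP.
Qed.

Hypothesis card_T : #|T| = n.

Lemma card_vertex_pred (P : pred T) : #|P| = count (P \o vertex) (iota 0 n).
Proof.
have uniq_vertices : uniq (map vertex (iota 0 n)).
  by rewrite map_inj_in_uniq ?iota_uniq // => i j; rewrite !mem_iota /=; apply: vertex_inj.
have all_vertices w : w \in map vertex (iota 0 n).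
  have size_le : size (enum T) <= size (map vertex (iota 0 n)).
    by rewrite size_map size_iota -cardE card_T.
  have sub_enum : {subset map vertex (iota 0 n) <= enum T} by move=> u _; rewrite mem_enum.
  by have [_ ->] := uniq_min_size uniq_vertices sub_enum size_le; rewrite mem_enum.
rewrite -count_map -size_filter -(card_uniqP _); last exact: filter_uniq.
by apply: eq_card => w; rewrite mem_filter all_vertices andbT.
Qed.

(* Leaves first: the rows of internal labels never fail. *)
Definition cubic_rows (f : bitseq) : bool :=
  lazy_all (fun i => count (completion_adj f i) (iota 0 n) == 3) (rev (iota 0 n)).

Definition triangle_free (f : bitseq) : bool :=
  all (fun a => all (fun b => if completion_adj f a b then all (fun c =>
    ~~ (completion_adj f b c && completion_adj f c a)) (iota 0 n) else true) (iota 0 n)) (iota 0 n).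

Definition square_free (f : bitseq) : bool :=
  all (fun a => all (fun b => if completion_adj f a b then all (fun c =>
    if (c != a) && completion_adj f b c then all (fun d =>
      ~~ [&& d != b, completion_adj f c d & completion_adj f d a]) (iota 0 n)
    else true) (iota 0 n) else true) (iota 0 n)) (iota 0 n).

Lemma cubic_rows_true_bits : cubic_rows true_bits.
Proof.
rewrite /cubic_rows lazy_allE; apply/allP => i; rewrite mem_rev mem_iota /= => i_lt.
rewrite -(eq_in_count (a1 := label_adj i)); last first.
  by move=> j; rewrite mem_iota /= => j_lt; apply: label_adjE.
by rewrite -card_vertex_pred -[X in _ == X](cubic (vertex i)).
Qed.

Lemma girth_le_label_cycle (s : seq nat) : 2 < size s -> all (gtn n) s -> uniq s ->
  cycle label_adj s -> girth e <= size s.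
Proof.
move=> size_s s_lt uniq_s cycle_s; rewrite -(size_map vertex); apply: girth_le.
apply/andP; split; first by rewrite size_map.
apply/existsP; exists (in_tuple (map vertex s)) => /=.
rewrite cycle_map cycle_s andbT map_inj_in_uniq // => i j i_s j_s.
by apply: vertex_inj; [move/allP: s_lt => /(_ i i_s) | move/allP: s_lt => /(_ j j_s)].
Qed.

Lemma label_adj_neq i j : label_adj i j -> i != j.
Proof. by apply: contraTneq => ->; rewrite /label_adj e_irr. Qed.

Lemma triangle_free_true_bits : 3 < g0 -> triangle_free true_bits.
Proof.
move=> g0_gt3; apply/allP => a; rewrite mem_iota /= => a_lt.
apply/allP => b; rewrite mem_iota /= => b_lt; rewrite -label_adjE //.
case: ifP => // ab; apply/allP => c; rewrite mem_iota /= => c_lt.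
rewrite -!label_adjE //; apply/negP => /andP[bc ca].
have uniq_abc : uniq [:: a; b; c].
  by rewrite /= !inE !negb_or (label_adj_neq ab) (label_adj_neq bc) eq_sym (label_adj_neq ca).
have := girth_le_label_cycle (s := [:: a; b; c]) isT.
rewrite /= a_lt b_lt c_lt ab bc ca => /(_ isT uniq_abc isT).
by move/(leq_trans g0_le_girth); rewrite leqNgt g0_gt3.
Qed.

Lemma square_free_true_bits : 4 < g0 -> square_free true_bits.
Proof.
move=> g0_gt4; apply/allP => a; rewrite mem_iota /= => a_lt.
apply/allP => b; rewrite mem_iota /= => b_lt; rewrite -label_adjE //.
case: ifP => // ab; apply/allP => c; rewrite mem_iota /= => c_lt.
rewrite -label_adjE //; case: ifP => // /andP[c_neq_a bc].
apply/allP => d; rewrite mem_iota /= => d_lt.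
rewrite -!label_adjE //; apply/negP => /and3P[d_neq_b cd da].
have uniq_abcd : uniq [:: a; b; c; d].
  rewrite /= !inE !negb_or (label_adj_neq ab) (label_adj_neq bc) (label_adj_neq cd).
  by rewrite [a == c]eq_sym c_neq_a [a == d]eq_sym (label_adj_neq da) [b == d]eq_sym d_neq_b.
have := girth_le_label_cycle (s := [:: a; b; c; d]) isT.
rewrite /= a_lt b_lt c_lt d_lt ab bc cd da => /(_ isT uniq_abcd isT).
by move/(leq_trans g0_le_girth); rewrite leqNgt g0_gt4.
Qed.

Variables (tg : nat -> nat -> bool) (sigma : bitseq -> nat -> nat).

Definition iso_cert (f : bitseq) : bool :=
  [&& all (fun i => sigma f i < n) (iota 0 n), uniq (map (sigma f) (iota 0 n)) &
      all (fun i => all (fun j => completion_adj f (sigma f i) (sigma f j) == tg i j)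
        (iota 0 n)) (iota 0 n)].

Definition completion_ok (f : bitseq) : bool :=
  if ~~ cubic_rows f then true
  else if (3 < g0) && ~~ triangle_free f then true
  else if (4 < g0) && ~~ square_free f then true
  else iso_cert f.

Hypothesis completions : all completion_ok (bitseqs (size far)).

Lemma tree_labelling_iso : graph_iso e (fun i j : 'I_n => tg i j).
Proof.
have /allP/(_ true_bits) := completions; rewrite bitseqsP ?size_map // => /(_ isT).
rewrite /completion_ok cubic_rows_true_bits /=.
have -> : (3 < g0) && ~~ triangle_free true_bits = false.
  by case: ltnP => // /triangle_free_true_bits->.
have -> : (4 < g0) && ~~ square_free true_bits = false.
  by case: ltnP => // /square_free_true_bits->.
case/and3P=> /allP sigma_lt sigma_uniq /allP sigma_adj.
pose s := sigma true_bits.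
have s_lt (i : 'I_n) : s i < n by apply: sigma_lt; rewrite mem_iota /=.
pose h (i : 'I_n) : T := vertex (s i).
have h_inj : injective h.
  move=> i j /(vertex_inj (s_lt i) (s_lt j)) sij; apply: val_inj => /=.
  have := nth_uniq 0 _ _ sigma_uniq; rewrite size_map size_iota => /(_ i j (ltn_ord i) (ltn_ord j)).
  by rewrite !(nth_map 0) ?size_iota // !nth_iota // !add0n -/s sij eqxx => /esym/eqP.
have [h' hK h'K] : bijective h by apply: inj_card_bij; rewrite // card_ord card_T.
exists h'; split; first by exists h.
move=> u v; rewrite -{1}[u]h'K -{1}[v]h'K -[e _ _]/(label_adj _ _) label_adjE ?s_lt //.
have := sigma_adj (h' u); rewrite mem_iota /= ltn_ord => /(_ isT) /allP /(_ (h' v)).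
by rewrite mem_iota /= ltn_ord => /(_ isT) /eqP adj_uv; exact: adj_uv.
Qed.

End TreeLabelling.

Definition tree_certificate (n : nat) (parent child : nat -> nat) (g0 : nat)
    (far : seq (nat * nat)) (tg : nat -> nat -> bool) (sigma : bitseq -> nat -> nat) : bool :=
  [&& tree_shape n parent child, labels_distinct n parent child g0,
      adjacency_classified n parent g0 far &
      all (completion_ok n parent g0 far tg sigma) (bitseqs (size far))].

Lemma tree_certificate_iso {T : finType} {e : rel T} (root : T) {n parent child g0 far tg sigma} :
  simple_graph e -> (forall x, valency e x = 3) -> #|T| = n -> g0 <= girth e ->
  tree_certificate n parent child g0 far tg sigma -> graph_iso e (fun i j : 'I_n => tg i j).
Proof.
move=> [e_sym e_irr] cubic card_T g0_le /and4P[shape distinct classified completions].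
exact: (tree_labelling_iso e_sym e_irr cubic root shape g0_le distinct classified card_T
  completions).
Qed.

(** * The three cages *)

Definition rel_of_edges (E : seq (nat * nat)) : rel nat :=
  fun i j => ((i, j) \in E) || ((j, i) \in E).

Definition K33_parent (i : nat) : nat := nth 0 [:: 0; 0; 0; 0; 1; 1] i.
Definition K33_child (i : nat) : nat := nth 0 [:: 0; 0; 1; 2; 0; 1] i.
Definition K33_far : seq (nat * nat) := [:: (2, 4); (2, 5); (3, 4); (3, 5)].
Definition K33_edges : seq (nat * nat) :=
  [:: (0, 1); (0, 2); (0, 3); (1, 4); (1, 5); (2, 4); (2, 5); (3, 4); (3, 5)].
Definition K33 : rel 'I_6 := fun i j => rel_of_edges K33_edges i j.

Lemma K33_certificate :
  tree_certificate 6 K33_parent K33_child 4 K33_far (rel_of_edges K33_edges) (fun _ i => i).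
Proof. vm_cast_no_check (erefl true). Qed.

Definition petersen_parent (i : nat) : nat := nth 0 [:: 0; 0; 0; 0; 1; 1; 2; 2; 3; 3] i.
Definition petersen_child (i : nat) : nat := nth 0 [:: 0; 0; 1; 2; 0; 1; 0; 1; 0; 1] i.
Definition petersen_far : seq (nat * nat) :=
  [:: (4, 6); (4, 7); (4, 8); (4, 9); (5, 6); (5, 7); (5, 8); (5, 9);
      (6, 8); (6, 9); (7, 8); (7, 9)].
Definition petersen_edges : seq (nat * nat) :=
  [:: (0, 1); (0, 2); (0, 3); (1, 4); (1, 5); (2, 6); (2, 7); (3, 8); (3, 9);
      (4, 6); (4, 8); (5, 7); (5, 9); (6, 9); (7, 8)].
Definition petersen : rel 'I_10 := fun i j => rel_of_edges petersen_edges i j.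

(* Every admissible completion is the listed graph up to swapping the leaves 6, 7 and the
   leaves 8, 9; which swaps are needed is read off the neighbours of leaf 4. *)
Definition petersen_relabel (f : bitseq) (i : nat) : nat :=
  let adj := completion_adj 10 petersen_parent petersen_far f in
  match i with
  | 6 => if adj 4 6 then 6 else 7
  | 7 => if adj 4 6 then 7 else 6
  | 8 => if adj 4 8 then 8 else 9
  | 9 => if adj 4 8 then 9 else 8
  | _ => i
  end.

Lemma petersen_certificate :
  tree_certificate 10 petersen_parent petersen_child 5 petersen_far
    (rel_of_edges petersen_edges) petersen_relabel.
Proof. vm_cast_no_check (erefl true). Qed.

Definition heawood_parent (i : nat) : nat :=
  nth 0 [:: 0; 0; 0; 0; 1; 1; 2; 2; 3; 3; 4; 4; 5; 5] i.
Definition heawood_child (i : nat) : nat :=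
  nth 0 [:: 0; 0; 1; 2; 0; 1; 0; 1; 0; 1; 0; 1; 0; 1] i.
Definition heawood_far : seq (nat * nat) :=
  [seq (i, j) | i <- [:: 6; 7; 8; 9], j <- [:: 10; 11; 12; 13]].
Definition heawood_edges : seq (nat * nat) :=
  [:: (0, 1); (0, 2); (0, 3); (1, 4); (1, 5); (2, 6); (2, 7); (3, 8); (3, 9); (4, 10); (4, 11);
      (5, 12); (5, 13); (6, 10); (6, 12); (7, 11); (7, 13); (8, 10); (9, 11); (8, 13); (9, 12)].
Definition heawood : rel 'I_14 := fun i j => rel_of_edges heawood_edges i j.

(* Leaves 10, 11 and 12, 13 are ordered by their adjacency to leaf 6, then leaves 8, 9 by
   their adjacency to the first of 10, 11. *)
Definition heawood_relabel (f : bitseq) (i : nat) : nat :=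
  let adj := completion_adj 14 heawood_parent heawood_far f in
  let c1 := if adj 6 10 then 10 else 11 in
  let c2 := if adj 6 10 then 11 else 10 in
  let d1 := if adj 6 12 then 12 else 13 in
  let d2 := if adj 6 12 then 13 else 12 in
  let b1 := if adj 8 c1 then 8 else 9 in
  let b2 := if adj 8 c1 then 9 else 8 in
  match i with
  | 8 => b1 | 9 => b2 | 10 => c1 | 11 => c2 | 12 => d1 | 13 => d2
  | _ => i
  end.

Lemma heawood_certificate :
  tree_certificate 14 heawood_parent heawood_child 6 heawood_far
    (rel_of_edges heawood_edges) heawood_relabel.
Proof. vm_cast_no_check (erefl true). Qed.

Section Cages.
Variables (T : finType) (e : rel T).
Hypotheses (simple : simple_graph e) (cubic : forall x, valency e x = 3).

Lemma K33_unique : #|T| = 6 -> 4 <= girth e -> graph_iso e K33.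
Proof.
move=> card_T girth_ge; have /card_gt0P[root _] : 0 < #|T| by rewrite card_T.
exact: (tree_certificate_iso root simple cubic card_T girth_ge K33_certificate).
Qed.

Lemma petersen_unique : #|T| = 10 -> 5 <= girth e -> graph_iso e petersen.
Proof.
move=> card_T girth_ge; have /card_gt0P[root _] : 0 < #|T| by rewrite card_T.
exact: (tree_certificate_iso root simple cubic card_T girth_ge petersen_certificate).
Qed.

Lemma heawood_unique : #|T| = 14 -> 6 <= girth e -> graph_iso e heawood.
Proof.
move=> card_T girth_ge; have /card_gt0P[root _] : 0 < #|T| by rewrite card_T.
exact: (tree_certificate_iso root simple cubic card_T girth_ge heawood_certificate).
Qed.

End Cages.

Lemma genus_girth_bounds (v E g : nat) :
  (4 <= 1%:Z - v%:Z + E%:Z)%R -> ~ (g%:Z <= ((1%:Z - v%:Z + E%:Z + 3) %/ 2)%Z)%R ->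
  v + 3 <= E /\ E + 5 <= g.*2 + v.
Proof. lia. Qed.

Theorem mainTheorem10 :
  exists (n1 n2 n3 : nat) (e1 : rel 'I_n1) (e2 : rel 'I_n2) (e3 : rel 'I_n3),
  forall (T : finType) (e : rel T),
    simple_graph e ->
    two_connected e ->
    (forall x : T, 3 <= valency e x) ->
    (4 <= genus e)%R ->
    ~ ((girth e)%:Z <= ((genus e + 3) %/ 2)%Z)%R ->
    graph_iso e e1 \/ graph_iso e e2 \/ graph_iso e e3.
Proof.
exists 6, 10, 14, K33, petersen, heawood.
move=> T e simple [_ card_T_ge3 _] valency_ge3 genus_ge4 girth_gt.
have [e_sym e_irr] := simple.
have /card_gt0P[x _] : 0 < #|T| by apply: leq_trans card_T_ge3.
have /card_gt0P[y exy] : 0 < valency e x by apply: leq_trans (valency_ge3 x).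
have [edges_ge girth_ge] := genus_girth_bounds genus_ge4 girth_gt.
have cubic_of := valency_eq3 e_sym e_irr valency_ge3.
have [] := small_girth_cases (card_edges_ge e_sym e_irr valency_ge3) edges_ge girth_ge
  (moore_bound_odd e_sym e_irr valency_ge3 x) (moore_bound_even e_sym e_irr valency_ge3 exy).
- by case=> card_T /cubic_of cubic girth4; left; apply: K33_unique; rewrite ?girth4.
- by case=> card_T /cubic_of cubic girth5; right; left; apply: petersen_unique; rewrite ?girth5.
- by case=> card_T /cubic_of cubic girth6; right; right; apply: heawood_unique; rewrite ?girth6.
Qed.
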